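(* Let $(Y,\mathfrak{T})$ be a fuzzy topological space and let $\mathcal{P},\mathcal{G}$ be fuzzy primals on $Y$. Then $\mathfrak{T}^\diamond_{\mathcal{P}\cup\mathcal{G}}=\mathfrak{T}^\diamond_{\mathcal{P}}\cap\mathfrak{T}^\diamond_{\mathcal{G}}$.
   Context: Let $Y$ be a nonempty set and $\mathbb{I}=[0,1]$. A fuzzy set in $Y$ is a map $Y\to\mathbb{I}$; $\mathbb{I}^Y$ is the set of all fuzzy sets; $0_Y,1_Y$ are the constant maps with values $0,1$; $\mu\subseteq\nu$ means $\mu(y)\le\nu(y)$ for all $y$; unions/intersections are pointwise sup/inf; $\bar\mu=1_Y-\mu$. For $\mu,\nu\in\mathbb{I}^Y$, $(\mu\oplus\nu)(y)=\min(\mu(y)+\nu(y),1)$. A fuzzy point $y_t$ ($y\in Y$, $t\in(0,1]$) is the fuzzy set with value $t$ at $y$ and $0$ elsewhere; $y_t\in\mu$ means $t\le\mu(y)$. We write $y_t\prec\mu$ if $t+\mu(y)>1$. A set $F$ of fuzzy points is identified with the fuzzy set $y\mapsto\sup\{t: y_t\in F\}$ (with $\sup\emptyset=0$). A fuzzy topology on $Y$ is a family $\mathfrak{T}\subseteq\mathbb{I}^Y$ containing $0_Y,1_Y$ and closed under finite intersections and arbitrary unions. For a fuzzy point $y_t$, $\mathcal{Q}(y_t)=\{\mu\in\mathfrak{T}: y_t\prec\mu\}$. A fuzzy primal on $Y$ is a family $\mathcal{P}\subseteq\mathbb{I}^Y$ such that: (i) $1_Y\notin\mathcal{P}$; (ii)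 if $\mu\in\mathcal{P}$ and $\nu\subseteq\mu$ then $\nu\in\mathcal{P}$; (iii) if $\mu\cap\nu\in\mathcal{P}$ then $\mu\in\mathcal{P}$ or $\nu\in\mathcal{P}$. (The union of two fuzzy primals is a fuzzy primal.) For a fuzzy primal $\mathcal{P}$ and $\lambda\in\mathbb{I}^Y$, $\lambda^\diamond_{\mathcal{P}}$ is the set of fuzzy points $y_t$ such that $\bar{\lambda}\oplus\bar{\mu}\in\mathcal{P}$ for every $\mu\in\mathcal{Q}(y_t)$; $Cl^\diamond_{\mathcal{P}}(\lambda)=\lambda\cup\lambda^\diamond_{\mathcal{P}}$; and $\mathfrak{T}^\diamond_{\mathcal{P}}=\{\mu\in\mathbb{I}^Y: Cl^\diamond_{\mathcal{P}}(\bar{\mu})=\bar{\mu}\}$. *)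

From HB Require Import structures.
From mathcomp Require Import all_boot all_order all_algebra.
From mathcomp Require Import all_classical all_reals.
Set Implicit Arguments. Unset Strict Implicit. Unset Printing Implicit Defensive.
Import Order.TTheory GRing.Theory Num.Theory.
Local Open Scope ring_scope.
Local Open Scope classical_set_scope.

Section FuzzyDefs.
Variables (R : realType) (Y : Type).

Definition is_fuzzy (mu : Y -> R) : Prop := forall y, 0 <= mu y <= 1.

Definition fzero : Y -> R := fun _ => 0.
Definition fone : Y -> R := fun _ => 1.
Definition fsubset (mu nu : Y -> R) : Prop := forall y, mu y <= nu y.
Definition fcompl (mu : Y -> R) : Y -> R := fun y => 1 - mu y.
Definition fcap (mu nu : Y -> R) : Y -> R := fun y => Num.min (mu y) (nu y).
Definition fcup (mu nu : Y -> R) : Y -> R := fun y => Num.max (mu y) (nu y).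
(* arbitrary union: pointwise supremum (sup of the empty set is 0) *)
Definition fbigcup (F : set (Y -> R)) : Y -> R :=
  fun y => sup [set mu y | mu in F].
Definition foplus (mu nu : Y -> R) : Y -> R :=
  fun y => Num.min (mu y + nu y) 1.

(* a set of fuzzy points y_t (t in (0,1]) is represented by S : Y -> R -> Prop,
   S y t meaning y_t belongs to the set; it is identified with the fuzzy set
   y |-> sup {t | y_t in S}. *)
Definition is_fpoint_set (S : Y -> R -> Prop) : Prop :=
  forall y t, S y t -> 0 < t <= 1.
Definition fpset_to_fuzzy (S : Y -> R -> Prop) : Y -> R :=
  fun y => sup [set t | S y t].

Definition fuzzy_topology (T : set (Y -> R)) : Prop :=
  (forall mu, T mu -> is_fuzzy mu) /\
  T fzero /\ T fone /\
  (forall mu nu, T mu -> T nu -> T (fcap mu nu)) /\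
  (forall F : set (Y -> R), F `<=` T -> T (fbigcup F)).

Definition Qnbhd (T : set (Y -> R)) (y : Y) (t : R) : set (Y -> R) :=
  [set mu | T mu /\ t + mu y > 1].

Definition fuzzy_primal (P : set (Y -> R)) : Prop :=
  (forall mu, P mu -> is_fuzzy mu) /\
  ~ P fone /\
  (forall mu nu, P mu -> is_fuzzy nu -> fsubset nu mu -> P nu) /\
  (forall mu nu, is_fuzzy mu -> is_fuzzy nu -> P (fcap mu nu) -> P mu \/ P nu).

Definition diamond (T P : set (Y -> R)) (lam : Y -> R) : Y -> R -> Prop :=
  fun y t => (0 < t <= 1) /\
    forall mu, Qnbhd T y t mu -> P (foplus (fcompl lam) (fcompl mu)).

Definition Cl_diamond (T P : set (Y -> R)) (lam : Y -> R) : Y -> R :=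
  fcup lam (fpset_to_fuzzy (diamond T P lam)).

Definition T_diamond (T P : set (Y -> R)) : set (Y -> R) :=
  [set mu | is_fuzzy mu /\ Cl_diamond T P (fcompl mu) = fcompl mu].

End FuzzyDefs.

From mathcomp Require Import all_boot all_order all_algebra.
From mathcomp Require Import all_classical all_reals.
Local Open Scope ring_scope.
Local Open Scope classical_set_scope.
Import Order.TTheory GRing.Theory Num.Theory.

(* A fuzzy set mu is T^diamond_P-open exactly when every fuzzy
   point y_t of the diamond set of its complement satisfies t <= 1 - mu y
   (closure_fixed_iff_bounded).  The theorem therefore reduces to the
   pointwise identity
       (lambda)^diamond_{P u G} = (lambda)^diamond_P u (lambda)^diamond_G
   (diamond_setU).  The inclusion from right to left is monotonicity in the
   primal.  For the converse, if y_t fails for P by a Q-neighbourhood n1 and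
   for G by n2, then n1 /\ n2 is again a Q-neighbourhood of y_t; the witness
   (comp lambda) (+) (comp (n1 /\ n2)) lies in P or in G and dominates the two
   failing witnesses, which contradicts heredity of P and of G. *)

Section FuzzyFacts.
Context {R : realType} {Y : Type}.
Implicit Types (mu nu lam : Y -> R) (T P G : set (Y -> R)).

Lemma fcompl_fuzzy {mu} : is_fuzzy mu -> is_fuzzy (fcompl mu).
Proof.
move=> fmu y; have /andP[m0 m1] := fmu y.
by rewrite /fcompl subr_ge0 m1 lerBlDr lerDl m0.
Qed.

Lemma foplus_fuzzy {mu nu} : is_fuzzy mu -> is_fuzzy nu -> is_fuzzy (foplus mu nu).
Proof.
move=> fmu fnu y; have /andP[m0 _] := fmu y; have /andP[n0 _] := fnu y.
by rewrite /foplus le_min addr_ge0 //= ler01 ge_min lexx orbT.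
Qed.

Lemma foplus_compl_anti lam mu nu :
  fsubset mu nu -> fsubset (foplus lam (fcompl nu)) (foplus lam (fcompl mu)).
Proof.
move=> smn y; rewrite /foplus /fcompl; apply: le_min2 => //.
by rewrite lerD2l lerD2l lerN2.
Qed.

Lemma Qnbhd_cap {T y t mu nu} :
  (forall mu nu, T mu -> T nu -> T (fcap mu nu)) ->
  Qnbhd T y t mu -> Qnbhd T y t nu -> Qnbhd T y t (fcap mu nu).
Proof.
move=> Tcap [Tmu lt_mu] [Tnu lt_nu]; split; first exact: Tcap.
by rewrite /fcap /Num.min; case: ifP.
Qed.

Definition fhereditary P :=
  forall mu nu, P mu -> is_fuzzy nu -> fsubset nu mu -> P nu.

Lemma primal_hereditary P : fuzzy_primal P -> fhereditary P.
Proof. by case=> _ [_ []]. Qed.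

Lemma diamond_monotone T P G lam y t :
  P `<=` G -> diamond T P lam y t -> diamond T G lam y t.
Proof. by move=> sPG [tb D]; split=> // mu /D /sPG. Qed.

Lemma not_diamond {T P lam y t} :
  (0 < t <= 1) -> ~ diamond T P lam y t ->
  exists2 mu, Qnbhd T y t mu & ~ P (foplus (fcompl lam) (fcompl mu)).
Proof.
move=> tb nD; apply: contra_notP nD => noW; split=> // mu Qmu.
by apply: contra_notP noW => nP; exists mu.
Qed.

Lemma diamond_setU T P G lam y t :
  (forall mu, T mu -> is_fuzzy mu) ->
  (forall mu nu, T mu -> T nu -> T (fcap mu nu)) ->
  fhereditary P -> fhereditary G -> is_fuzzy lam ->
  diamond T (P `|` G) lam y t <-> diamond T P lam y t \/ diamond T G lam y t.
Proof.
move=> Tf Tcap hP hG flam; split; last first.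
  by case=> D; apply: diamond_monotone D => mu; [left | right].
move=> [tb D]; apply: contrapT => /not_orP[nDP nDG].
have [n1 Q1 nP] := not_diamond tb nDP.
have [n2 Q2 nG] := not_diamond tb nDG.
have witness_fuzzy nu : T nu -> is_fuzzy (foplus (fcompl lam) (fcompl nu)).
  by move=> Tnu; apply: foplus_fuzzy; apply: fcompl_fuzzy => //; apply: Tf.
have [PG|PG] := D _ (Qnbhd_cap Tcap Q1 Q2).
- apply: nP; apply: hP PG (witness_fuzzy _ Q1.1) _.
  by apply: foplus_compl_anti => z; rewrite /fcap ge_min lexx.
- apply: nG; apply: hG PG (witness_fuzzy _ Q2.1) _.
  by apply: foplus_compl_anti => z; rewrite /fcap ge_min lexx orbT.
Qed.

Lemma closure_fixed_iff_bounded {T P mu} : is_fuzzy mu ->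
  Cl_diamond T P (fcompl mu) = fcompl mu <->
  forall y t, diamond T P (fcompl mu) y t -> t <= 1 - mu y.
Proof.
move=> fmu; split.
- move=> Efix y t Dt.
  have hub : has_ubound [set s | diamond T P (fcompl mu) y s].
    by exists 1 => s [/andP[_ ->] _].
  apply: le_trans (ub_le_sup hub Dt) _.
  have := congr1 (fun f => f y) Efix; rewrite /Cl_diamond /fcup /fcompl => <-.
  by rewrite le_max lexx orbT.
- move=> bounded; apply: funext => y; rewrite /Cl_diamond /fcup /fpset_to_fuzzy.
  apply/max_idPl.
  have [ne|empty] := pselect ([set s | diamond T P (fcompl mu) y s] !=set0).
    by apply: ge_sup => // s; apply: bounded.
  have -> : [set s | diamond T P (fcompl mu) y s] = set0.
    by apply/seteqP; split=> // s Ds; apply: empty; exists s.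
  by rewrite sup0; have /andP[] := fcompl_fuzzy fmu y.
Qed.

End FuzzyFacts.

Theorem theorem4p11 (R : realType) (Y : Type) (T P G : set (Y -> R)) :
  inhabited Y ->
  fuzzy_topology T -> fuzzy_primal P -> fuzzy_primal G ->
  T_diamond T (P `|` G) = T_diamond T P `&` T_diamond T G.
Proof.
move=> _ [Tf [_ [_ [Tcap _]]]] /primal_hereditary hP /primal_hereditary hG.
have dU mu : is_fuzzy mu -> forall y t,
    diamond T (P `|` G) (fcompl mu) y t <->
    diamond T P (fcompl mu) y t \/ diamond T G (fcompl mu) y t.
  by move=> fmu y t; apply: diamond_setU => //; apply: fcompl_fuzzy.
apply/seteqP; split=> mu.
- move=> [fmu /(closure_fixed_iff_bounded fmu) bnd].
  split; split=> //; apply/(closure_fixed_iff_bounded fmu) => y t Dt;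
    apply: bnd; apply/(dU _ fmu).
  + by left.
  + by right.
- move=> [[fmu /(closure_fixed_iff_bounded fmu) bP]
          [_ /(closure_fixed_iff_bounded fmu) bG]].
  split=> //; apply/(closure_fixed_iff_bounded fmu) => y t /(dU _ fmu).
  by case; [apply: bP | apply: bG].
Qed.
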